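(* For any traversal sequence $\tau$, distance metric $d$, and sequence of tasks $w^1,\ldots,w^n$, let $C^{A2}=w^{A2}+d^{A2}$ be the total cost (processing cost plus transition cost) of the ''follow the traversal'' algorithm, and $C^T=w^T+d^T$ the total cost (processing cost plus transition cost) of the fractional traversal algorithm on that sequence of tasks. Then $C^{A2}\leq 2\cdot C^T$.
   Context: Setting: a metrical task system with state set $S=\{1,\ldots,m\}$ and a symmetric nonnegative distance $d$ on $S$ with $d_{ss}=0$ satisfying the triangle inequality. A task is a vector $w=(w_1,\ldots,w_m)$ of nonnegative reals; $w_s$ is the cost of processing the task in state $s$. A traversal sequence $\tau=\tau_1,\tau_2,\ldots$ is an infinite sequence of states (states may repeat). The traversal distance between indices $\ell,\ell'$ is $\delta_{\ell,\ell'}=\delta_{\ell',\ell}=\sum_{j=\min(\ell,\ell')}^{\max(\ell,\ell')-1} d_{\tau_j,\tau_{j+1}}$. Fractional traversal algorithm (Borodin–Linial–Saks): it keeps a current index $j$ in $\tau$ (starting at $t_0=1$) and the work $\rho_j$ expended at position $j$ since arriving there. On task $w^i$ it processes fractions of the task in state $\tau_j$; whenever the work done at position $j$ reaches $d_{\tau_j,\tau_{j+1}}$ it moves to position $j+1$ (paying $d_{\tau_j,\tau_{j+1}}$) and resets $\rho$ to $0$, continuing until the whole task is done. Let $t_i$ be its index after task $i$, and $\lambda^i_j$ the fraction of task $i$ processed at position $j$ ($\sum_j\lambda^i_j=1$). Its cost on task $i$ is $\delta_{t_{i-1},t_i}+\sum_{j=t_{i-1}}^{t_i}\lambda^i_j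 w^i_{\tau_j}$. ''Follow the traversal'' algorithm: it keeps an index $\ell_{i-1}$ in $\tau$ ($\ell_0=1$) and simulates the fractional traversal algorithm (index $t_{i-1}$). On task $w^i$, let $j_{\min}=\min(\ell_{i-1},t_{i-1})$, $j_{\max}=\max(\ell_{i-1},t_{i-1})$, and define $\tilde c(j)=w^i_{\tau_j}$ if $j_{\min}\le j\le j_{\max}$, $\tilde c(j)=w^i_{\tau_j}+\delta_{j_{\max},j}$ if $j>j_{\max}$, and $\tilde c(j)=\infty$ otherwise. It sets $\ell_i\in\arg\min_{j\ge j_{\min}}\tilde c(j)$ (ties broken arbitrarily), moves from state $\tau_{\ell_{i-1}}$ to state $\tau_{\ell_i}$ (paying $d_{\tau_{\ell_{i-1}},\tau_{\ell_i}}$) and processes the whole task there (paying $w^i_{\tau_{\ell_i}}$). *)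

From mathcomp Require Import all_boot all_order all_algebra.
Set Implicit Arguments. Unset Strict Implicit. Unset Printing Implicit Defensive.
Import Order.TTheory GRing.Theory Num.Theory.
Local Open Scope ring_scope.

Section MTS.
Variable R : realFieldType.
Variable m : nat.
(* states S = 'I_m, distance d, traversal sequence tau (indices start at 1;
   tau 0 is never used) *)
Variable d : 'I_m -> 'I_m -> R.
Variable tau : nat -> 'I_m.

Definition dstep (j : nat) : R := d (tau j) (tau j.+1).

Definition tdist (l l' : nat) : R :=
  \sum_(minn l l' <= j < maxn l l') dstep j.

Definition metric : Prop :=
  [/\ forall s t, 0 <= d s t,
      forall s, d s s = 0,
      forall s t, d s t = d t s &
      forall s t u, d s u <= d s t + d t u].

(* Fractional traversal algorithm processing ONE task x.
   ft_task x j rho f j' rho' c : starting at index j with work rho already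
   expended at j and a remaining fraction f of task x, the algorithm ends at
   index j' with work rho' expended there, paying total cost c (moving costs
   + processing costs). *)
Inductive ft_task (x : 'I_m -> R) : nat -> R -> R -> nat -> R -> R -> Prop :=
| ft_done j rho :
    rho < dstep j -> ft_task x j rho 0 j rho 0
| ft_move j rho f j' rho' c :
    rho = dstep j ->
    ft_task x j.+1 0 f j' rho' c ->
    ft_task x j rho f j' rho' (dstep j + c)
| ft_all j rho f j' rho' c :
    rho < dstep j -> 0 < f -> rho + f * x (tau j) <= dstep j ->
    ft_task x j (rho + f * x (tau j)) 0 j' rho' c ->
    ft_task x j rho f j' rho' (f * x (tau j) + c)
| ft_part j rho f j' rho' c :
    rho < dstep j -> 0 < f -> dstep j < rho + f * x (tau j) ->
    ft_task x j (dstep j) (f - (dstep j - rho) / x (tau j)) j' rho' c ->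
    ft_task x j rho f j' rho' (dstep j - rho + c).

Definition ctil (x : 'I_m -> R) (jmax j : nat) : R :=
  if (j <= jmax)%N then x (tau j) else x (tau j) + tdist jmax j.

Definition follow_choice (x : 'I_m -> R) (l t l' : nat) : Prop :=
  (minn l t <= l')%N /\
  forall j, (minn l t <= j)%N -> ctil x (maxn l t) l' <= ctil x (maxn l t) j.

(* joint run of both algorithms on a sequence of tasks:
   run ws l t rho CA CT : starting with follow-the-traversal at index l and the
   fractional algorithm at index t with work rho, processing the tasks ws gives
   total cost CA for follow-the-traversal and CT for the fractional algorithm. *)
Inductive run : seq {ffun 'I_m -> R} -> nat -> nat -> R -> R -> R -> Prop :=
| run_nil l t rho : run [::] l t rho 0 0
| run_cons (x : {ffun 'I_m -> R}) ws l t rho l' t' rho' cT CA CT :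
    ft_task x t rho 1 t' rho' cT ->
    follow_choice x l t l' ->
    run ws l' t' rho' CA CT ->
    run (x :: ws) l t rho (d (tau l) (tau l') + x (tau l') + CA) (cT + CT).

End MTS.

From mathcomp Require Import all_boot all_order all_algebra lra.
Import Order.TTheory GRing.Theory Num.Theory.
Set Implicit Arguments. Unset Strict Implicit. Unset Printing Implicit Defensive.
Local Open Scope ring_scope.

(* Amortized analysis with potential delta(l, t) between the two algorithms.
   Summing traversal distances maps the traversal onto a line (position [pos j]),
   where delta becomes the distance |pos l - pos t| and d is dominated by it.
   On one task the fractional algorithm pays its whole walk delta(t, t') plus at
   least the cost of some state tau_j0 visited on the way (a convex combination
   of costs dominates their minimum); since follow the traversal picks l' with
   c~(l') <= c~(j0), the per-task inequality
     cost_A2 + delta(l', t') <= 2 cost_T + delta(l, t)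
   becomes an inequality between five points on a line, which telescopes. *)

(* [a, b, c, p, q] are the positions of l, t, t', l', j0; [X, Y] the costs of
   the task in the states tau_l' and tau_j0. *)
Lemma line_amortized_step (R : realDomainType) (a b c p q X Y : R) :
  b <= q <= c -> Num.min a b <= p -> 0 <= X -> 0 <= Y ->
  X + Num.max 0 (p - Num.max a b) <= Y + Num.max 0 (q - Num.max a b) ->
  `|a - p| + X + `|p - c| <= 2 * (Y + (c - b)) + `|a - b|.
Proof.
case: (lerP 0 (p - Num.max a b)); case: (lerP 0 (q - Num.max a b)).
all: case: (lerP a b); case: (lerP a p); case: (lerP p c); lra.
Qed.

Lemma ler_convex_min (R : realDomainType) (lam f : R) :
  0 <= lam -> lam <= f ->
  forall y z, f * Num.min y z <= lam * y + (f - lam) * z.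
Proof.
move=> lam_ge0 lam_le y z; case: (lerP y z) => [yz | /ltW zy].
  have : 0 <= (f - lam) * (z - y) by apply: mulr_ge0; rewrite ?subr_ge0.
  lra.
have : 0 <= lam * (y - z) by apply: mulr_ge0; rewrite ?subr_ge0.
lra.
Qed.

Section Traversal.
Variables (R : realFieldType) (m : nat) (d : 'I_m -> 'I_m -> R) (tau : nat -> 'I_m).
Hypothesis d_metric : metric d.

Definition pos (j : nat) : R := \sum_(0 <= i < j) dstep d tau i.

Lemma dstep_ge0 j : 0 <= dstep d tau j.
Proof. by case: d_metric => d_ge0 _ _ _; apply: d_ge0. Qed.

Lemma posS j : pos j.+1 = pos j + dstep d tau j.
Proof. by rewrite /pos big_nat_recr. Qed.

Lemma pos_sub a b : (a <= b)%N -> pos b - pos a = \sum_(a <= i < b) dstep d tau i.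
Proof. by move=> ab; rewrite /pos (big_cat_nat (leq0n a) ab) /= addrAC subrr add0r. Qed.

Lemma pos_le a b : (a <= b)%N -> pos a <= pos b.
Proof.
by move=> ab; rewrite -subr_ge0 pos_sub //; apply: sumr_ge0 => i _; apply: dstep_ge0.
Qed.

Lemma pos_maxn a b : pos (maxn a b) = Num.max (pos a) (pos b).
Proof.
case: leqP => ab; first by rewrite (max_idPr (pos_le ab)).
by rewrite (max_idPl (pos_le (ltnW ab))).
Qed.

Lemma pos_minn a b : pos (minn a b) = Num.min (pos a) (pos b).
Proof.
case: leqP => ab; first by rewrite (min_idPl (pos_le ab)).
by rewrite (min_idPr (pos_le (ltnW ab))).
Qed.

Lemma tdistE a b : tdist d tau a b = `|pos a - pos b|.
Proof.
rewrite /tdist -pos_sub ?geq_min ?leq_max ?leqnn // pos_maxn pos_minn.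
by case: lerP.
Qed.

Lemma d_le_pos a b : (a <= b)%N -> d (tau a) (tau b) <= pos b - pos a.
Proof.
case: d_metric => _ d0 _ d_tri.
move=> /subnK <-; elim: (b - a)%N => [|k IH]; first by rewrite add0n d0 subrr.
rewrite addSn posS; have := d_tri (tau a) (tau (k + a)) (tau (k + a).+1).
rewrite -/(dstep d tau (k + a)); lra.
Qed.

Lemma d_le_tdist a b : d (tau a) (tau b) <= tdist d tau a b.
Proof.
case: d_metric => _ _ dC _; rewrite tdistE.
case: (leqP a b) => ab; first by rewrite distrC ger0_norm ?subr_ge0 ?pos_le ?d_le_pos.
by rewrite dC ger0_norm ?subr_ge0 ?pos_le ?d_le_pos ?(ltnW ab).
Qed.

Lemma ctilE x k j : ctil d tau x k j = x (tau j) + Num.max 0 (pos j - pos k).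
Proof.
rewrite /ctil tdistE; case: leqP => jk.
  have jk' : pos j - pos k <= 0 by rewrite subr_le0 pos_le.
  by rewrite (max_idPl jk') addr0.
have jk' : 0 <= pos j - pos k by rewrite subr_ge0 pos_le // ltnW.
by rewrite distrC ger0_norm // (max_idPr jk').
Qed.

Lemma ft_task_cost x j rho f j' rho' c :
  (forall s, 0 <= x s) -> ft_task d tau x j rho f j' rho' c -> 0 <= f ->
  exists2 j0, (j <= j0 <= j')%N & f * x (tau j0) + (pos j' - pos j) <= c.
Proof.
move=> x_ge0; elim=> {j rho f j' rho' c}.
- by move=> j rho _ _; exists j; rewrite ?leqnn // mul0r subrr addr0.
- move=> j rho f j' rho' c _ _ IH f_ge0; have [j0 /andP[jj0 j0j'] cost] := IH f_ge0.
  by exists j0; [rewrite (ltnW jj0) | move: cost; rewrite posS; lra].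
- move=> j rho f j' rho' c _ _ _ _ IH _; have [j0 /andP[jj0 j0j'] cost] := IH (lexx 0).
  by exists j; [rewrite leqnn (leq_trans jj0) | move: cost; rewrite mul0r; lra].
move=> j rho f j' rho' c rho_lt _ overflow _ IH _.
have y_gt0 : 0 < x (tau j).
  rewrite lt_def x_ge0 andbT; apply: contraTneq overflow => ->.
  by rewrite mulr0 addr0 -leNgt ltW.
set lam := (_ - rho) / _ in IH.
have lam_y : lam * x (tau j) = dstep d tau j - rho by rewrite divfK ?gt_eqF.
have lam_ge0 : 0 <= lam by rewrite divr_ge0 ?subr_ge0 ?ltW.
have lam_le : lam <= f by rewrite ler_pdivrMr //; lra.
have [j0 /andP[jj0 j0j'] cost] := IH (ltac:(by rewrite subr_ge0)).
clearbody lam.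
have := ler_convex_min lam_ge0 lam_le (x (tau j)) (x (tau j0)).
case: (lerP (x (tau j)) (x (tau j0))) => _ split.
  by exists j; [rewrite leqnn (leq_trans jj0) | lra].
by exists j0; [rewrite jj0 | lra].
Qed.

Lemma follow_step x l t l' t' j0 cT :
  (forall s, 0 <= x s) ->
  (t <= j0 <= t')%N -> x (tau j0) + (pos t' - pos t) <= cT ->
  follow_choice d tau x l t l' ->
  d (tau l) (tau l') + x (tau l') + tdist d tau l' t' <= 2 * cT + tdist d tau l t.
Proof.
move=> x_ge0 /andP[tj0 j0t'] cost [l'_ge choice].
have := choice j0 (leq_trans (geq_minr l t) tj0); rewrite !ctilE pos_maxn => cmp.
have := d_le_tdist l l'; rewrite !tdistE => dist.
have t_j0_t' : pos t <= pos j0 <= pos t' by rewrite !pos_le.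
have := pos_le l'_ge; rewrite pos_minn => l'_right.
have := line_amortized_step t_j0_t' l'_right (x_ge0 _) (x_ge0 _) cmp; lra.
Qed.

Lemma run_bound (ws : seq {ffun 'I_m -> R}) l t rho CA CT :
  (forall x, x \in ws -> forall s, 0 <= x s) ->
  run d tau ws l t rho CA CT -> CA <= 2 * CT + tdist d tau l t.
Proof.
move=> + hrun; elim: hrun => {ws l t rho CA CT}
  [l t rho | x ws l t rho l' t' rho' cT CA CT ft choice _ IH] ws_ge0.
  by rewrite mulr0 add0r tdistE normr_ge0.
have x_ge0 := ws_ge0 x (mem_head x ws).
have {}IH := IH (fun y y_ws => ws_ge0 y (@mem_behead _ (x :: ws) y y_ws)).
have [j0 j0_range] := ft_task_cost x_ge0 ft ler01; rewrite mul1r => cost.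
have := follow_step x_ge0 j0_range cost choice; lra.
Qed.

End Traversal.

Theorem theorem3 (R : realFieldType) (m : nat) (d : 'I_m -> 'I_m -> R)
  (tau : nat -> 'I_m) (ws : seq {ffun 'I_m -> R}) (CA CT : R) :
  metric d ->
  (forall x, x \in ws -> forall s, 0 <= x s) ->
  run d tau ws 1 1 0 CA CT ->
  CA <= 2 * CT.
Proof.
move=> d_metric ws_ge0 hrun.
by have := run_bound d_metric ws_ge0 hrun; rewrite /tdist maxnn minnn big_geq // addr0.
Qed.
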